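(* In the setting described in the context, fix $n$ and a piecewise constant function $\bar u^n\colon\mathbb{R}\to\Omega^n$ (with finitely many jumps) and let $u^n$ be the approximate solution constructed from $\bar u^n$ by the wave-front tracking algorithm with the approximate Riemann solver $\mathcal{R}^n$. Then for every $t>0$, every phase transition performed by $x\mapsto u^n(t,x)$ from $u_-$ to $u_+$ satisfies $(u_-,u_+)\in\mathcal{G}_{\rm e}$. Moreover, the number of phase transitions performed by $x\mapsto u^n(t,x)$, $t\ge0$, does not increase with time, and it strictly decreases if and only if two phase transitions interact. Finally, the number of phase transitions can decrease only by an even number.
   Context: Standing assumptions. Let $R_{\rm f}''>0$ and $v_{\rm f}\in C^2([0,R_{\rm f}''];\mathbb{R}_+)$ with $v_{\rm f}(R_{\rm f}'')>0$ and, for every $\rho\in[0,R_{\rm f}'']$, $v_{\rm f}'(\rho)\le0$, $v_{\rm f}(\rho)+\rho v_{\rm f}'(\rho)>0$, $2v_{\rm f}'(\rho)+\rho v_{\rm f}''(\rho)\le0$. Let $R_{\rm f}'\in\,]0,R_{\rm f}''[$ and $p\in C^2([R_{\rm f}',+\infty[;\mathbb{R})$ with $p'(\rho)>0$, $2p'(\rho)+\rho p''(\rho)>0$ for $\rho\ge R_{\rm f}'$. Assume $\rho\mapsto v_{\rm f}(\rho)+p(\rho)$ is increasing on $[R_{\rm f}',R_{\rm f}'']$ and $v_{\rm f}(\rho)<\rho p'(\rho)$ on $[R_{\rm f}',R_{\rm f}'']$. Set $V_{\max}\doteq v_{\rm f}(0)$, $V_{\rm f}\doteq v_{\rm f}(R_{\rm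 f}'')$, $W_{\max}\doteq p(R_{\rm f}'')+V_{\rm f}$, $W_{\rm c}\doteq p(R_{\rm f}')+v_{\rm f}(R_{\rm f}')$, $W_{\min}\doteq W_{\rm c}+v_{\rm f}(R_{\rm f}')-V_{\max}$, $R_{\max}\doteq p^{-1}(W_{\max})$, and fix $V_{\rm c}\in\,]0,V_{\rm f}[$. Domains. Write $u=(\rho,v)$. $\Omega_{\rm f}\doteq\{u\in[0,R_{\rm f}'']\times[V_{\rm f},V_{\max}]: v=v_{\rm f}(\rho)\}$, $\Omega_{\rm c}\doteq\{u\in[0,R_{\max}]\times[0,V_{\rm c}]: W_{\rm c}\le v+p(\rho)\le W_{\max}\}$, $\Omega_{\rm f}'\doteq\{u\in\Omega_{\rm f}:\rho<R_{\rm f}'\}$, $\Omega_{\rm f}''\doteq\{u\in\Omega_{\rm f}:\rho\in[R_{\rm f}',R_{\rm f}'']\}$, $\Omega\doteq\Omega_{\rm f}\cup\Omega_{\rm c}$. For $w\in[W_{\rm c},W_{\max}]$, $\rho_{\rm f}(w)$ is the unique $\rho\in[R_{\rm f}',R_{\rm f}'']$ with $v_{\rm f}(\rho)+p(\rho)=w$. Extended Riemann invariants: $w_1(u)=v$ on $\Omega_{\rm c}$, $w_1(u)=V_{\rm f}$ on $\Omega_{\rm f}$; $w_2(u)=v+p(\rho)$ on $\Omega_{\rm c}\cup\Omega_{\rm f}''$, $w_2(u)=W_{\rm c}+v_{\rm f}(R_{\rm f}')-v_{\rm f}(\rho)$ on $\Omega_{\rm f}'$. For $\rho_-\ne\rho_+$,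 $\sigma(u_-,u_+)\doteq(\rho_+v_+-\rho_-v_-)/(\rho_+-\rho_-)$. The model is LWR $\rho_t+(\rho v_{\rm f}(\rho))_x=0$ in $\Omega_{\rm f}$ and ARZ ($\rho_t+(\rho v)_x=0$, $[\rho(v+p(\rho))]_t+[\rho(v+p(\rho))v]_x=0$) in $\Omega_{\rm c}$. A phase transition is a discontinuity between a state in $\Omega_{\rm f}$ and a state in $\Omega_{\rm c}$. $\mathcal{G}_{\rm e}\doteq\mathcal{G}_1\cup\mathcal{G}_2\cup\mathcal{G}_3$ with $\mathcal{G}_1\doteq\{(u_-,u_+)\in\Omega_{\rm f}'\times\Omega_{\rm c}:[w_2(u_+)-W_{\rm c}]\rho_-=0\}$, $\mathcal{G}_2\doteq\{(u_-,u_+)\in\Omega_{\rm f}''\times\Omega_{\rm c}:w_2(u_-)=w_2(u_+)\}$, $\mathcal{G}_3\doteq\{(u_-,u_+)\in\Omega_{\rm c}\times\Omega_{\rm f}'':w_2(u_-)=w_2(u_+),\ v_-=V_{\rm c}\}$. Riemann solver $\mathcal{R}$. $\mathcal{R}_{\rm LWR}[u_\ell,u_r]$ is the self-similar Lax solution of the LWR Riemann problem ($u_\ell,u_r\in\Omega_{\rm f}$); $\mathcal{R}_{\rm ARZ}[u_\ell,u_r]$ the self-similar Lax solution of the ARZ Riemann problem ($u_\ell,u_r\in\Omega_{\rm c}$). (R1) If both states lie in $\Omega_{\rm f}$ (resp. $\Omega_{\rm c}$), $\mathcal{R}=\mathcal{R}_{\rm LWR}$ (resp. $\mathcal{R}_{\rm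 ARZ}$). (R2) If $u_\ell\in\Omega_{\rm f}$, $u_r\in\Omega_{\rm c}$: $\mathcal{R}[u_\ell,u_r](x)=u_\ell$ for $x<\sigma(u_\ell,u_m)$, $=\mathcal{R}_{\rm ARZ}[u_m,u_r](x)$ for $x>\sigma(u_\ell,u_m)$, with $u_m=(p^{-1}(\max\{W_{\rm c},w_2(u_\ell)\}-v_r),v_r)$. (R3) If $u_\ell\in\Omega_{\rm c}$, $u_r\in\Omega_{\rm f}$: $\mathcal{R}[u_\ell,u_r](x)=\mathcal{R}_{\rm ARZ}[u_\ell,u_m'](x)$ for $x<\sigma(u_m',u_m'')$, $=\mathcal{R}_{\rm LWR}[u_m'',u_r](x)$ for $x>\sigma(u_m',u_m'')$, with $u_m'=(p^{-1}(w_2(u_\ell)-V_{\rm c}),V_{\rm c})$, $u_m''=(\rho_{\rm f}(w_2(u_\ell)),v_{\rm f}(\rho_{\rm f}(w_2(u_\ell))))$. Grid and approximate solver. $\varepsilon^n_v\doteq2^{-n}V_{\rm c}$, $\varepsilon^n_w\doteq2^{-n}(W_{\rm c}-W_{\min})$, $W^n\doteq\{W_{\min}+i\varepsilon^n_w:i=0,\dots,\lfloor(W_{\max}-W_{\min})/\varepsilon^n_w\rfloor\}$, $V^n\doteq\{i\varepsilon^n_v:i=0,\dots,2^n\}\cup\{V_{\rm f}\}$, $\Omega^n\doteq\{u\in\Omega:w_1(u)\in V^n,w_2(u)\in W^n\}$. $\mathcal{R}^n\colon\Omega^n\times\Omega^n\to L^1_{\rm loc}(\mathbb{R};\Omega^n)$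 is obtained from $\mathcal{R}$ by replacing every rarefaction fan by a discretized one: a rarefaction in $\Omega_{\rm f}$ from $u_\ell$ to $u_r$ with $w_2(u_r)=w_2(u_\ell)-j\varepsilon^n_w$ is replaced by jumps between consecutive states $u_0=u_\ell,u_1,\dots,u_j=u_r\in\Omega_{\rm f}\cap\Omega^n$ with $w_2(u_i)=w_2(u_\ell)-i\varepsilon^n_w$, the jump from $u_{i-1}$ to $u_i$ travelling with speed $\sigma(u_{i-1},u_i)$; a rarefaction in $\Omega_{\rm c}$ from $u_\ell$ to $u_r$ with $w_1(u_r)=w_1(u_\ell)+j\varepsilon^n_v$, $w_2(u_r)=w_2(u_\ell)$ is replaced likewise by jumps between $u_i\in\Omega_{\rm c}\cap\Omega^n$ with $w_1(u_i)=w_1(u_\ell)+i\varepsilon^n_v$, $w_2(u_i)=w_2(u_\ell)$; all other waves are kept. Wave-front tracking. Given piecewise constant $\bar u^n$ with values in $\Omega^n$, $u^n$ is built by solving with $\mathcal{R}^n$ the Riemann problem at each jump of $\bar u^n$ at $t=0$, letting each jump between $u_-,u_+$ travel along a straight line with speed $\sigma(u_-,u_+)$, and at each time two or more fronts meet solving with $\mathcal{R}^n$ the Riemann problem given by the states at the interaction point; $u^n$ is taken left continuous in time. *)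

From Stdlib Require Import Reals Lra List ClassicalEpsilon.
Import ListNotations.
Open Scope R_scope.

Definition deriv_in (D : R -> Prop) (f df : R -> R) : Prop :=
  forall x, D x -> forall eps, 0 < eps -> exists delta, 0 < delta /\
    forall y, D y -> 0 < Rabs (y - x) < delta ->
      Rabs ((f y - f x) / (y - x) - df x) < eps.

Definition cont_in (D : R -> Prop) (g : R -> R) : Prop :=
  forall x, D x -> forall eps, 0 < eps -> exists delta, 0 < delta /\
    forall y, D y -> Rabs (y - x) < delta -> Rabs (g y - g x) < eps.

Record Model := mkModel {
  vf  : R -> R;
  pp  : R -> R;
  Rf1 : R;
  Rf2 : R;
  Vc  : R
}.

Definition state := (R * R)%type.
Definition rho (u : state) : R := fst u.
Definition vel (u : state) : R := snd u.

Definition Vmax (M : Model) : R := vf M 0.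
Definition Vfl  (M : Model) : R := vf M (Rf2 M).
Definition Wmax (M : Model) : R := pp M (Rf2 M) + Vfl M.
Definition Wc   (M : Model) : R := pp M (Rf1 M) + vf M (Rf1 M).
Definition Wmin (M : Model) : R := Wc M + vf M (Rf1 M) - Vmax M.

Definition inOf (M : Model) (u : state) : Prop :=
  0 <= rho u <= Rf2 M /\ Vfl M <= vel u <= Vmax M /\ vel u = vf M (rho u).
(* p is only defined on [R_f', +oo[, hence rho >= R_f' *)
Definition inOc (M : Model) (u : state) : Prop :=
  Rf1 M <= rho u /\ 0 <= vel u <= Vc M /\
  Wc M <= vel u + pp M (rho u) <= Wmax M.
Definition inOf1 (M : Model) (u : state) : Prop := inOf M u /\ rho u < Rf1 M.
Definition inOf2 (M : Model) (u : state) : Prop :=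
  inOf M u /\ Rf1 M <= rho u <= Rf2 M.

Definition w1 (M : Model) (u : state) : R :=
  if excluded_middle_informative (inOc M u) then vel u else Vfl M.
Definition w2 (M : Model) (u : state) : R :=
  if excluded_middle_informative (inOc M u \/ inOf2 M u)
  then vel u + pp M (rho u)
  else Wc M + vf M (Rf1 M) - vf M (rho u).

Definition sigma (a b : state) : R :=
  (rho b * vel b - rho a * vel a) / (rho b - rho a).

Definition eps_v (M : Model) (n : nat) : R := Vc M / 2 ^ n.
Definition eps_w (M : Model) (n : nat) : R := (Wc M - Wmin M) / 2 ^ n.

Definition inWn (M : Model) (n : nat) (w : R) : Prop :=
  exists i : nat, INR i <= (Wmax M - Wmin M) / eps_w M n /\
                  w = Wmin M + INR i * eps_w M n.
Definition inVn (M : Model) (n : nat) (v : R) : Prop :=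
  (exists i : nat, (i <= 2 ^ n)%nat /\ v = INR i * eps_v M n) \/ v = Vfl M.
Definition inOmegan (M : Model) (n : nat) (u : state) : Prop :=
  (inOf M u \/ inOc M u) /\ inVn M n (w1 M u) /\ inWn M n (w2 M u).

(* ---------- approximate Riemann solver R^n ----------
   A solution is encoded by the list L of states such that the solution
   consists of jumps ul -> L_0 -> L_1 -> ... -> last = ur, each jump between
   consecutive states a,b travelling with speed sigma a b. *)

Definition disc_raref_f (M : Model) (n : nat) (ul ur : state) (L : list state) : Prop :=
  L <> [] /\ last L ul = ur /\
  forall i, (i < length L)%nat ->
    inOf M (nth i L ul) /\ inOmegan M n (nth i L ul) /\
    w2 M (nth i L ul) = w2 M ul - INR (S i) * eps_w M n.

Definition disc_raref_c (M : Model) (n : nat) (ul ur : state) (L : list state) : Prop :=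
  L <> [] /\ last L ul = ur /\
  forall i, (i < length L)%nat ->
    inOc M (nth i L ul) /\ inOmegan M n (nth i L ul) /\
    w1 M (nth i L ul) = w1 M ul + INR (S i) * eps_v M n /\
    w2 M (nth i L ul) = w2 M ul.

(* LWR (concave flux): shock if rho_l < rho_r, rarefaction if rho_l > rho_r *)
Definition solve_LWR (M : Model) (n : nat) (ul ur : state) (L : list state) : Prop :=
  (ul = ur /\ L = []) \/
  (rho ul < rho ur /\ L = [ur]) \/
  (rho ur < rho ul /\ disc_raref_f M n ul ur L).

Definition wave1 (M : Model) (n : nat) (ul um : state) (L : list state) : Prop :=
  (ul = um /\ L = []) \/
  (vel um < vel ul /\ L = [um]) \/
  (vel ul < vel um /\ disc_raref_c M n ul um L).

(* ARZ: u_m = (p^{-1}(w2(ul) - v_r), v_r), 1-wave ul->um then 2-contact um->ur *)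
Definition solve_ARZ (M : Model) (n : nat) (ul ur : state) (L : list state) : Prop :=
  exists um : state, vel um = vel ur /\ Rf1 M <= rho um /\
    pp M (rho um) = w2 M ul - vel ur /\
    exists L1, wave1 M n ul um L1 /\
      ((um = ur /\ L = L1) \/ (um <> ur /\ L = L1 ++ [ur])).

Definition RS (M : Model) (n : nat) (ul ur : state) (L : list state) : Prop :=
  (inOf M ul /\ inOf M ur /\ solve_LWR M n ul ur L) \/
  (inOc M ul /\ inOc M ur /\ solve_ARZ M n ul ur L) \/
  (inOf M ul /\ inOc M ur /\
     exists um : state, vel um = vel ur /\ Rf1 M <= rho um /\
       pp M (rho um) = Rmax (Wc M) (w2 M ul) - vel ur /\
       exists L2, solve_ARZ M n um ur L2 /\ L = um :: L2) \/
  (inOc M ul /\ inOf M ur /\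
     exists um1 um2 : state,
       vel um1 = Vc M /\ Rf1 M <= rho um1 /\ pp M (rho um1) = w2 M ul - Vc M /\
       Rf1 M <= rho um2 <= Rf2 M /\ vel um2 = vf M (rho um2) /\
       vf M (rho um2) + pp M (rho um2) = w2 M ul /\
       exists L1 L2, solve_ARZ M n ul um1 L1 /\ solve_LWR M n um2 ur L2 /\
                     L = L1 ++ um2 :: L2).

(* ---------- wave-front tracking ----------
   A front is (x, u_-, u_+): x its position at the starting time of the
   current stage, moving with speed sigma u_- u_+. *)
Definition front := (R * state * state)%type.
Definition fx (f : front) : R := fst (fst f).
Definition fa (f : front) : state := snd (fst f).
Definition fb (f : front) : state := snd f.
Definition dfront : front := (0, (0, 0), (0, 0)).

Fixpoint fan_fronts (x : R) (a : state) (L : list state) : list front :=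
  match L with
  | [] => []
  | b :: L' => (x, a, b) :: fan_fronts x b L'
  end.

Definition pos (Tk : R) (f : front) (t : R) : R :=
  fx f + (t - Tk) * sigma (fa f) (fb f).

(* initial data: left state u0 and jumps (y_j, a_j); each jump solved by R^n *)
Inductive init_rel (M : Model) (n : nat) : state -> list (R * state) -> list front -> Prop :=
| init_nil : forall a, init_rel M n a [] []
| init_cons : forall a y b js L C,
    RS M n a b L -> init_rel M n b js C ->
    init_rel M n a ((y, b) :: js) (fan_fronts y a L ++ C).

Definition group_interacts (G : list front) : Prop :=
  exists i, (S i < length G)%nat /\ fx (nth i G dfront) <> fx (nth (S i) G dfront).

Definition group_out (M : Model) (n : nat) (Tk Tk1 : R) (G out : list front) : Prop :=
  let xs := pos Tk (hd dfront G) Tk1 in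
  let a := fa (hd dfront G) in
  let b := fb (last G dfront) in
  (group_interacts G /\ exists L, RS M n a b L /\ out = fan_fronts xs a L) \/
  (~ group_interacts G /\ out = map (fun f => (xs, fa f, fb f)) G).

Inductive resolve (M : Model) (n : nat) (Tk Tk1 : R) : list front -> list front -> Prop :=
| res_nil : resolve M n Tk Tk1 [] []
| res_grp : forall G rest out out',
    G <> [] ->
    (forall f, In f G -> pos Tk f Tk1 = pos Tk (hd dfront G) Tk1) ->
    (match rest with
     | [] => True
     | g :: _ => pos Tk g Tk1 <> pos Tk (hd dfront G) Tk1
     end) ->
    group_out M n Tk Tk1 G out ->
    resolve M n Tk Tk1 rest out' ->
    resolve M n Tk Tk1 (G ++ rest) (out ++ out').

Definition step (M : Model) (n : nat) (Tk : R) (Ck : list front) (Tk1 : R)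
    (Ck1 : list front) : Prop :=
  Tk < Tk1 /\
  (forall t, Tk <= t <= Tk1 -> forall i, (S i < length Ck)%nat ->
     pos Tk (nth i Ck dfront) t <= pos Tk (nth (S i) Ck dfront) t) /\
  (forall t, Tk < t < Tk1 -> forall i, (S i < length Ck)%nat ->
     fx (nth i Ck dfront) < fx (nth (S i) Ck dfront) ->
     pos Tk (nth i Ck dfront) t < pos Tk (nth (S i) Ck dfront) t) /\
  (exists i, (S i < length Ck)%nat /\
     fx (nth i Ck dfront) < fx (nth (S i) Ck dfront) /\
     pos Tk (nth i Ck dfront) Tk1 = pos Tk (nth (S i) Ck dfront) Tk1) /\
  resolve M n Tk Tk1 Ck Ck1.

(* the first K interactions of the wave-front tracking construction:
   stage k lives on the time interval (T k, T (k+1)] (left continuity) *)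
Definition wft_run (M : Model) (n : nat) (u0 : state) (js : list (R * state))
    (K : nat) (T : nat -> R) (C : nat -> list front) : Prop :=
  T 0%nat = 0 /\ init_rel M n u0 js (C 0%nat) /\
  forall k, (k < K)%nat -> step M n (T k) (C k) (T (S k)) (C (S k)).

Definition ubar_ok (M : Model) (n : nat) (u0 : state) (js : list (R * state)) : Prop :=
  inOmegan M n u0 /\ (forall y a, In (y, a) js -> inOmegan M n a) /\
  forall i, (S i < length js)%nat ->
    fst (nth i js (0, u0)) < fst (nth (S i) js (0, u0)).

Definition isPT (M : Model) (a b : state) : Prop :=
  (inOf M a /\ inOc M b) \/ (inOc M a /\ inOf M b).

Definition inG1 (M : Model) (a b : state) : Prop :=
  inOf1 M a /\ inOc M b /\ (w2 M b - Wc M) * rho a = 0.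
Definition inG2 (M : Model) (a b : state) : Prop :=
  inOf2 M a /\ inOc M b /\ w2 M a = w2 M b.
Definition inG3 (M : Model) (a b : state) : Prop :=
  inOc M a /\ inOf2 M b /\ w2 M a = w2 M b /\ vel a = Vc M.
Definition inGe (M : Model) (a b : state) : Prop :=
  inG1 M a b \/ inG2 M a b \/ inG3 M a b.

Definition PTind (M : Model) (a b : state) : nat :=
  if excluded_middle_informative (isPT M a b) then 1%nat else 0%nat.

Fixpoint countPT (M : Model) (C : list front) : nat :=
  match C with
  | [] => 0%nat
  | f :: C' => (PTind M (fa f) (fb f) + countPT M C')%nat
  end.

Fixpoint countPT_ubar (M : Model) (a : state) (js : list (R * state)) : nat :=
  match js with
  | [] => 0%nat
  | (_, b) :: js' => (PTind M a b + countPT_ubar M b js')%nat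
  end.

Definition PT_interact (M : Model) (Tk : R) (Ck : list front) (Tk1 : R) : Prop :=
  exists i j, (i < j)%nat /\ (j < length Ck)%nat /\
    isPT M (fa (nth i Ck dfront)) (fb (nth i Ck dfront)) /\
    isPT M (fa (nth j Ck dfront)) (fb (nth j Ck dfront)) /\
    fx (nth i Ck dfront) <> fx (nth j Ck dfront) /\
    pos Tk (nth i Ck dfront) Tk1 = pos Tk (nth j Ck dfront) Tk1.

From Stdlib Require Import Reals List Lra Lia Classical ClassicalEpsilon Sorted.
Import ListNotations.
Open Scope R_scope.

(** Every state of [Omega] lies in exactly one of the phases [Omega_f], [Omega_c].
    Hence along a chain of fronts from [a] to [b] the number of phase transitions
    is at least, and has the parity of, the indicator that [a] and [b] lie in
    different phases; a Riemann solution of [R^n] realises exactly that indicator,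
    with its phase transition in [G_e] by construction.  At an interaction the
    fronts meeting at a point are replaced by the Riemann solution between their
    outer states, so their phase transitions drop to 0 or 1 with unchanged
    parity, while fronts that merely share a point are left untouched.  Since
    phase transitions always sit at pairwise distinct points, the count drops
    exactly when two of them meet. *)

Section NonpositiveDerivative.

Variables (lo hi : R) (f df : R -> R).
Hypothesis f_deriv : deriv_in (fun r => lo <= r <= hi) f df.
Hypothesis df_nonpos : forall r, lo <= r <= hi -> df r <= 0.

Lemma deriv_in_nonpos_local s eps : lo <= s <= hi -> 0 < eps ->
  exists delta, 0 < delta /\ forall z, lo <= z <= hi ->
    (s < z < s + delta -> f z <= f s + eps * (z - s)) /\
    (s - delta < z < s -> f s <= f z + eps * (s - z)).
Proof.
intros Hs Heps. destruct (f_deriv s Hs eps Heps) as [delta [Hdelta Hd]].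
exists delta. split; [exact Hdelta|]. intros z Hz.
set (q := (f z - f s) / (z - s)).
assert (Hslope : z <> s -> Rabs (z - s) < delta -> f z - f s = q * (z - s) /\ q < eps).
{ intros Hne Hlt. split; [unfold q; field; lra|].
  assert (Hzs : z - s <> 0) by (intros ?; apply Hne; lra).
  assert (Hq := Hd z Hz (conj (Rabs_pos_lt _ Hzs) Hlt)).
  apply Rabs_def2 in Hq as [Hq _]. pose proof (df_nonpos s Hs). fold q in Hq. lra. }
split; intros Hzs.
- destruct Hslope as [Heq Hq]; [lra|rewrite Rabs_right; lra|]. nra.
- destruct Hslope as [Heq Hq]; [lra|rewrite Rabs_left; lra|]. nra.
Qed.

Lemma deriv_in_nonpos_slope_bound x y eps : lo <= x -> x <= y -> y <= hi -> 0 < eps ->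
  f y <= f x + eps * (y - x).
Proof.
intros Hx Hxy Hy Heps.
(* Continuous induction: the supremum of the points up to which the bound holds is [y]. *)
set (E := fun r => x <= r <= y /\ forall z, x <= z <= r -> f z <= f x + eps * (z - x)).
assert (Ex : E x).
{ split; [lra|]. intros z Hz. replace z with x by lra. lra. }
destruct (completeness E) as [s [Hub Hlub]].
{ exists y. intros r [Hr _]. lra. }
{ exists x. exact Ex. }
assert (Hxs : x <= s) by (apply Hub; exact Ex).
assert (Hsy : s <= y) by (apply Hlub; intros r [Hr _]; lra).
assert (Hbelow : forall z, x <= z < s -> f z <= f x + eps * (z - x)).
{ intros z Hz. destruct (classic (exists r, E r /\ z < r)) as [[r [[_ Hr] Hzr]] | Hnone].
  - apply Hr. lra.
  - exfalso. enough (s <= z) by lra. apply Hlub. intros r Hr.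
    apply Rnot_lt_le. intros Hzr. apply Hnone. exists r. auto. }
assert (Hat : f s <= f x + eps * (s - x)).
{ destruct (Req_dec s x) as [->|Hsx]; [lra|].
  destruct (deriv_in_nonpos_local s eps ltac:(lra) Heps) as [delta [Hdelta Hloc]].
  set (z := Rmax x (s - delta / 2)).
  assert (x <= z /\ s - delta / 2 <= z) by (split; [apply Rmax_l | apply Rmax_r]).
  assert (z < s) by (apply Rmax_lub_lt; lra).
  pose proof (Hbelow z ltac:(lra)).
  pose proof (proj2 (Hloc z ltac:(lra)) ltac:(lra)). lra. }
enough (s = y) by (subst s; exact Hat).
apply Rle_antisym; [exact Hsy|]. apply Rnot_lt_le. intros Hsy'.
destruct (deriv_in_nonpos_local s eps ltac:(lra) Heps) as [delta [Hdelta Hloc]].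
set (r := Rmin y (s + delta / 2)).
assert (r <= y /\ r <= s + delta / 2) by (split; [apply Rmin_l | apply Rmin_r]).
assert (s < r) by (apply Rmin_glb_lt; lra).
enough (E r) by (pose proof (Hub r ltac:(assumption)); lra).
split; [lra|]. intros z Hz.
destruct (Rtotal_order z s) as [Hlt | [-> | Hgt]].
- apply Hbelow. lra.
- exact Hat.
- pose proof (proj1 (Hloc z ltac:(lra)) ltac:(lra)). lra.
Qed.

Lemma deriv_in_nonpos_antitone x y : lo <= x -> x <= y -> y <= hi -> f y <= f x.
Proof.
intros Hx Hxy Hy. apply Rnot_lt_le. intros Hlt.
assert (Hxy' : x < y) by (destruct (Req_dec x y) as [->|]; lra).
set (eps := (f y - f x) / (2 * (y - x))).
assert (Heps : 0 < eps) by (apply Rdiv_lt_0_compat; lra).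
pose proof (deriv_in_nonpos_slope_bound x y eps Hx Hxy Hy Heps).
assert (eps * (y - x) = (f y - f x) / 2) by (unfold eps; field; lra).
lra.
Qed.

End NonpositiveDerivative.
Inductive chain : state -> list front -> state -> Prop :=
| chain_nil a : chain a [] a
| chain_cons a x c C b : chain c C b -> chain a ((x, a, c) :: C) b.

Lemma last_cons_default {A} (b a : A) L : last (b :: L) a = last L b.
Proof.
revert b. induction L as [|c L IH]; intros b; [reflexivity|].
simpl. destruct L; [reflexivity|]. apply IH.
Qed.

Lemma Forall_last {A} (P : A -> Prop) a L : P a -> Forall P L -> P (last L a).
Proof.
revert a. induction L as [|c L IH]; intros a Ha HL; [exact Ha|].
inversion HL; subst. rewrite last_cons_default. auto.
Qed.

Lemma Forall_of_nth {A} (P : A -> Prop) d L :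
  (forall i, (i < length L)%nat -> P (nth i L d)) -> Forall P L.
Proof.
intros H. apply Forall_forall. intros u Hu.
destruct (In_nth L u d Hu) as [i [Hi <-]]. auto.
Qed.

Lemma Sorted_of_nth {A} (Rl : A -> A -> Prop) d L :
  (forall i, (S i < length L)%nat -> Rl (nth i L d) (nth (S i) L d)) -> Sorted Rl L.
Proof.
induction L as [|x L IH]; intros H; constructor.
- apply IH. intros i Hi. apply (H (S i)). simpl; lia.
- destruct L; constructor. apply (H 0%nat). simpl; lia.
Qed.

Lemma StronglySorted_app_inv {A} (Rl : A -> A -> Prop) X Y :
  StronglySorted Rl (X ++ Y) ->
  StronglySorted Rl X /\ StronglySorted Rl Y /\ (forall x y, In x X -> In y Y -> Rl x y).
Proof.
induction X as [|x X IH]; simpl; intros H.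
- repeat split; [constructor | exact H | tauto].
- apply StronglySorted_inv in H as [H HF]. rewrite Forall_forall in HF.
  destruct (IH H) as (HX & HY & Hxy).
  repeat split; auto.
  + constructor; auto. apply Forall_forall. intros z Hz. apply HF, in_or_app; auto.
  + intros x' y [<- | Hx] Hy; auto. apply HF, in_or_app; auto.
Qed.

Lemma fan_fronts_fx x a L f : In f (fan_fronts x a L) -> fx f = x.
Proof.
revert a. induction L as [|c L IH]; simpl; intros a H; [contradiction|].
destruct H as [<- | H]; [reflexivity | eauto].
Qed.

Lemma fan_fronts_app x a L1 L2 :
  fan_fronts x a (L1 ++ L2) = fan_fronts x a L1 ++ fan_fronts x (last L1 a) L2.
Proof.
revert a. induction L1 as [|c L1 IH]; intros a; [reflexivity|].
rewrite last_cons_default. simpl. rewrite IH. reflexivity.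
Qed.

Lemma chain_fan_fronts x a L : chain a (fan_fronts x a L) (last L a).
Proof.
revert a. induction L as [|c L IH]; intros a; [constructor|].
rewrite last_cons_default. constructor. apply IH.
Qed.

Lemma chain_app a C1 m C2 b : chain a C1 m -> chain m C2 b -> chain a (C1 ++ C2) b.
Proof. induction 1; intros; simpl; auto. constructor; auto. Qed.

Lemma chain_app_inv a C1 C2 b : chain a (C1 ++ C2) b -> exists m, chain a C1 m /\ chain m C2 b.
Proof.
revert a. induction C1 as [|f C1 IH]; intros a H; simpl in *.
- exists a. split; [constructor | exact H].
- inversion H as [|? x c ? ? Hc]; subst.
  destruct (IH c Hc) as [m [H1 H2]]. exists m. split; [constructor|]; auto.
Qed.

Lemma chain_relocate x a C b :
  chain a C b -> chain a (map (fun f => (x, fa f, fb f)) C) b.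
Proof. induction 1; simpl; constructor; auto. Qed.

Lemma chain_hd_last a C b :
  chain a C b -> C <> [] -> fa (hd dfront C) = a /\ fb (last C dfront) = b.
Proof.
induction 1 as [a | a x c C b Hch IH]; intros Hne; [congruence|].
split; [reflexivity|]. destruct C as [|f C].
- inversion Hch. reflexivity.
- apply IH. discriminate.
Qed.

Section Phases.

Variable M : Model.
Hypothesis HVc : 0 < Vc M < Vfl M.
Hypothesis HR1 : 0 < Rf1 M < Rf2 M.
Hypothesis Hincr : forall r s, Rf1 M <= r -> r < s -> s <= Rf2 M ->
  vf M r + pp M r < vf M s + pp M s.
Hypothesis Hvf_anti : forall r s, 0 <= r -> r <= s -> s <= Rf2 M -> vf M s <= vf M r.

Definition inOmega (u : state) : Prop := inOf M u \/ inOc M u.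

Definition isPTf (f : front) : Prop := isPT M (fa f) (fb f).

Lemma inOf_inOc_disjoint u : inOf M u -> inOc M u -> False.
Proof. intros (_ & [Hv _] & _) (_ & [_ Hv'] & _). lra. Qed.

Lemma PTind_le1 a b : (PTind M a b <= 1)%nat.
Proof. unfold PTind. destruct excluded_middle_informative; lia. Qed.

Lemma PTind_isPT a b : isPT M a b -> PTind M a b = 1%nat.
Proof. unfold PTind. destruct excluded_middle_informative; tauto. Qed.

Lemma PTind_not_isPT a b : ~ isPT M a b -> PTind M a b = 0%nat.
Proof. unfold PTind. destruct excluded_middle_informative; tauto. Qed.

Lemma PTind_ff a b : inOf M a -> inOf M b -> PTind M a b = 0%nat.
Proof.
intros Ha Hb. apply PTind_not_isPT.
intros [[_ Hc] | [Hc _]]; [apply (inOf_inOc_disjoint b) | apply (inOf_inOc_disjoint a)]; auto.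
Qed.

Lemma PTind_cc a b : inOc M a -> inOc M b -> PTind M a b = 0%nat.
Proof.
intros Ha Hb. apply PTind_not_isPT.
intros [[Hf _] | [_ Hf]]; [apply (inOf_inOc_disjoint a) | apply (inOf_inOc_disjoint b)]; auto.
Qed.

Lemma PTind_fc a b : inOf M a -> inOc M b -> PTind M a b = 1%nat.
Proof. intros. apply PTind_isPT. left. auto. Qed.

Lemma PTind_cf a b : inOc M a -> inOf M b -> PTind M a b = 1%nat.
Proof. intros. apply PTind_isPT. right. auto. Qed.

Lemma PTind_triangle a c b : inOmega a -> inOmega c -> inOmega b ->
  exists k, (PTind M a c + PTind M c b = PTind M a b + 2 * k)%nat.
Proof.
intros [Ha | Ha] [Hc | Hc] [Hb | Hb];
  repeat match goal with
  | |- context [PTind M ?u ?v] =>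
      first [ rewrite (PTind_ff u v) by assumption | rewrite (PTind_cc u v) by assumption
            | rewrite (PTind_fc u v) by assumption | rewrite (PTind_cf u v) by assumption ]
  end;
  first [exists 0%nat; lia | exists 1%nat; lia].
Qed.

Lemma w2_inOc u : inOc M u -> w2 M u = vel u + pp M (rho u).
Proof. intros H. unfold w2. destruct excluded_middle_informative; tauto. Qed.

Lemma w2_inOf2 u : inOf2 M u -> w2 M u = vel u + pp M (rho u).
Proof. intros H. unfold w2. destruct excluded_middle_informative; tauto. Qed.

Lemma w2_inOf1 u : inOf1 M u -> w2 M u = Wc M + vf M (Rf1 M) - vf M (rho u).
Proof.
intros [Hf Hr]. unfold w2.
destruct excluded_middle_informative as [[Hc | [_ Hc]] | _]; [| lra | reflexivity].
exfalso. eapply inOf_inOc_disjoint; eauto.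
Qed.

Lemma Wc_le_Wmax : Wc M <= Wmax M.
Proof. unfold Wc, Wmax, Vfl. pose proof (Hincr (Rf1 M) (Rf2 M)). lra. Qed.

Lemma inOf_w2_cases u : inOf M u ->
  (inOf1 M u /\ w2 M u <= Wc M) \/ (inOf2 M u /\ Wc M <= w2 M u <= Wmax M).
Proof.
intros Hu. pose proof Hu as ([Hr0 Hr2] & _ & Hv).
destruct (Rlt_dec (rho u) (Rf1 M)) as [Hlt | Hge].
- left. split; [split; assumption|]. rewrite w2_inOf1 by (split; assumption).
  pose proof (Hvf_anti (rho u) (Rf1 M)). lra.
- right. split; [split; [assumption | lra]|]. rewrite w2_inOf2 by (split; [assumption | lra]).
  rewrite Hv. unfold Wc, Wmax, Vfl. split.
  + destruct (Req_dec (rho u) (Rf1 M)) as [-> | Hne]; [lra|].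
    pose proof (Hincr (Rf1 M) (rho u)). lra.
  + destruct (Req_dec (rho u) (Rf2 M)) as [-> | Hne]; [lra|].
    pose proof (Hincr (rho u) (Rf2 M)). lra.
Qed.

Definition fronts_in_Omega (C : list front) : Prop :=
  Forall (fun f => inOmega (fa f) /\ inOmega (fb f)) C.

Definition fronts_in_Ge (C : list front) : Prop :=
  Forall (fun f => isPTf f -> inGe M (fa f) (fb f)) C.

Definition fan_spec (x : R) (a b : state) (L : list state) : Prop :=
  let F := fan_fronts x a L in
  chain a F b /\ fronts_in_Omega F /\ fronts_in_Ge F /\ countPT M F = PTind M a b.

Lemma countPT_app C1 C2 : countPT M (C1 ++ C2) = (countPT M C1 + countPT M C2)%nat.
Proof. induction C1; simpl; lia. Qed.

Lemma fan_spec_single_phase (P : state -> Prop) x a L :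
  (forall u, P u -> inOmega u) -> (forall u v, P u -> P v -> PTind M u v = 0%nat) ->
  P a -> Forall P L -> fan_spec x a (last L a) L.
Proof.
intros HP HP0 Ha HL. split; [apply chain_fan_fronts|].
assert (HF : Forall (fun f => P (fa f) /\ P (fb f)) (fan_fronts x a L)).
{ revert a Ha. induction HL; intros a Ha; constructor; simpl; auto. }
repeat split.
- eapply Forall_impl; [|exact HF]. intros f [? ?]. auto.
- eapply Forall_impl; [|exact HF]. intros f [? ?] Hf.
  apply PTind_isPT in Hf. rewrite HP0 in Hf by assumption. discriminate.
- rewrite HP0 by (try apply Forall_last; assumption). clear HF.
  revert a Ha. induction HL; intros a Ha; simpl; [reflexivity|].
  rewrite HP0 by assumption. apply IHHL. assumption.
Qed.

Lemma fan_spec_cons x a c b L : fan_spec x c b L -> inOmega a -> inOmega c ->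
  (isPT M a c -> inGe M a c) -> (PTind M a c + PTind M c b = PTind M a b)%nat ->
  fan_spec x a b (c :: L).
Proof.
intros (H1 & H2 & H3 & H4) Ha Hc Hg Hp.
repeat split; try constructor; auto. simpl. unfold fa. simpl. lia.
Qed.

Lemma fan_spec_app x a m b L1 L2 : fan_spec x a m L1 -> last L1 a = m -> fan_spec x m b L2 ->
  (PTind M a m + PTind M m b = PTind M a b)%nat -> fan_spec x a b (L1 ++ L2).
Proof.
intros (H1 & H2 & H3 & H4) Hl (G1 & G2 & G3 & G4) Hp. unfold fan_spec.
rewrite fan_fronts_app, Hl.
repeat split; [eapply chain_app; eauto | apply Forall_app; auto | apply Forall_app; auto|].
rewrite countPT_app. lia.
Qed.

Lemma solve_LWR_states n a b L : inOf M b -> solve_LWR M n a b L ->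
  Forall (inOf M) L /\ last L a = b.
Proof.
intros Hb [[-> ->] | [[_ ->] | [_ (_ & Hl & Hall)]]]; auto.
split; [|exact Hl]. apply (Forall_of_nth _ a). intros i Hi. apply Hall, Hi.
Qed.

Lemma solve_ARZ_states n a b L : inOc M a -> inOc M b -> solve_ARZ M n a b L ->
  Forall (inOc M) L /\ last L a = b.
Proof.
intros Ha Hb (um & Hv & Hr & Hp & L1 & Hw & Hcase).
assert (Hum : inOc M um).
{ rewrite w2_inOc in Hp by exact Ha. destruct Ha as (_ & _ & Ha), Hb as (_ & Hb & _).
  repeat split; rewrite ?Hv; lra. }
assert (HL1 : Forall (inOc M) L1 /\ last L1 a = um).
{ destruct Hw as [[-> ->] | [[_ ->] | [_ (_ & Hl & Hall)]]]; auto.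
  split; [|exact Hl]. apply (Forall_of_nth _ a). intros i Hi. apply Hall, Hi. }
destruct HL1 as [HF Hl].
destruct Hcase as [[-> ->] | [_ ->]]; [auto|].
split; [apply Forall_app; auto | apply last_last].
Qed.

Lemma fan_spec_free_to_congested n x a b um L :
  inOf M a -> inOc M b -> vel um = vel b -> Rf1 M <= rho um ->
  pp M (rho um) = Rmax (Wc M) (w2 M a) - vel b -> solve_ARZ M n um b L ->
  fan_spec x a b (um :: L).
Proof.
intros Ha Hb Hv Hr Hp Hs.
pose proof Wc_le_Wmax. pose proof (inOf_w2_cases a Ha) as Hw.
pose proof (Rmax_l (Wc M) (w2 M a)).
assert (Rmax (Wc M) (w2 M a) <= Wmax M) by (apply Rmax_lub; lra).
assert (Hum : inOc M um).
{ destruct Hb as (_ & Hb & _). repeat split; rewrite ?Hv; lra. }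
assert (Hw2 : w2 M um = Rmax (Wc M) (w2 M a)) by (rewrite w2_inOc by exact Hum; lra).
destruct (solve_ARZ_states n um b L Hum Hb Hs) as [HF <-].
apply fan_spec_cons; try (left; assumption); try (right; assumption).
- apply (fan_spec_single_phase (inOc M)); auto. exact (fun u Hu => or_intror Hu). exact PTind_cc.
- intros _. destruct Hw as [[Ha1 Hle] | [Ha2 Hle]].
  + left. split; [exact Ha1|]. split; [exact Hum|]. rewrite Hw2, Rmax_left by lra. lra.
  + right; left. split; [exact Ha2|]. split; [exact Hum|]. rewrite Hw2, Rmax_right by lra. reflexivity.
- rewrite PTind_fc, PTind_cc, PTind_fc; auto.
Qed.

Lemma fan_spec_congested_to_free n x a b um1 um2 L1 L2 :
  inOc M a -> inOf M b ->
  vel um1 = Vc M -> Rf1 M <= rho um1 -> pp M (rho um1) = w2 M a - Vc M ->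
  Rf1 M <= rho um2 <= Rf2 M -> vel um2 = vf M (rho um2) ->
  vf M (rho um2) + pp M (rho um2) = w2 M a ->
  solve_ARZ M n a um1 L1 -> solve_LWR M n um2 b L2 ->
  fan_spec x a b (L1 ++ um2 :: L2).
Proof.
intros Ha Hb Hv1 Hr1 Hp1 Hr2 Hv2 Hw2 Hs1 Hs2.
assert (Hum1 : inOc M um1).
{ rewrite w2_inOc in Hp1 by exact Ha. destruct Ha as (_ & _ & Ha).
  repeat split; rewrite ?Hv1; lra. }
assert (Hum2 : inOf M um2).
{ split; [lra|]. split; [|exact Hv2]. rewrite Hv2. unfold Vfl, Vmax. split; apply Hvf_anti; lra. }
assert (Hum2' : inOf2 M um2) by (split; assumption).
destruct (solve_ARZ_states n a um1 L1 Ha Hum1 Hs1) as [HF1 Hl1].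
destruct (solve_LWR_states n um2 b L2 Hb Hs2) as [HF2 <-].
apply (fan_spec_app x a um1); auto.
- rewrite <- Hl1. apply (fan_spec_single_phase (inOc M)); auto.
  exact (fun u Hu => or_intror Hu). exact PTind_cc.
- apply fan_spec_cons; try (left; assumption); try (right; assumption).
  + apply (fan_spec_single_phase (inOf M)); auto. exact (fun u Hu => or_introl Hu). exact PTind_ff.
  + intros _. right; right. split; [exact Hum1|]. split; [exact Hum2'|].
    split; [|exact Hv1]. rewrite w2_inOc, w2_inOf2 by assumption. lra.
  + rewrite PTind_cf, PTind_ff, PTind_cf; auto.
- rewrite PTind_cc, PTind_cf, PTind_cf; auto.
Qed.

Lemma RS_fan_spec n x a b L : RS M n a b L -> fan_spec x a b L.
Proof.
intros [(Ha & Hb & Hs) | [(Ha & Hb & Hs) | [(Ha & Hb & um & Hv & Hr & Hp & L2 & Hs & ->) |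
         (Ha & Hb & um1 & um2 & Hv1 & Hr1 & Hp1 & Hr2 & Hv2 & Hw2 & L1 & L2 & Hs1 & Hs2 & ->)]]].
- destruct (solve_LWR_states n a b L Hb Hs) as [HF <-].
  apply (fan_spec_single_phase (inOf M)); auto. exact (fun u Hu => or_introl Hu). exact PTind_ff.
- destruct (solve_ARZ_states n a b L Ha Hb Hs) as [HF <-].
  apply (fan_spec_single_phase (inOc M)); auto. exact (fun u Hu => or_intror Hu). exact PTind_cc.
- eapply fan_spec_free_to_congested; eauto.
- eapply fan_spec_congested_to_free; eauto.
Qed.

Fixpoint PT_separated (C : list front) : Prop :=
  match C with
  | [] => True
  | f :: C' => (isPTf f -> forall g, In g C' -> isPTf g -> fx g <> fx f) /\ PT_separated C'
  end.

Definition PT_apart (C : list front) : Prop :=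
  exists f g, In f C /\ In g C /\ isPTf f /\ isPTf g /\ fx f <> fx g.

Lemma PT_separated_app C1 C2 : PT_separated C1 -> PT_separated C2 ->
  (forall f g, In f C1 -> In g C2 -> fx g <> fx f) -> PT_separated (C1 ++ C2).
Proof.
induction C1 as [|f C1 IH]; simpl; auto. intros [H1 H2] HC2 Hx. split.
- intros Hf g Hg Hpg. apply in_app_or in Hg as [Hg | Hg]; [eapply H1 | apply Hx]; eauto.
- apply IH; auto.
Qed.

Lemma PT_separated_app_inv C1 C2 : PT_separated (C1 ++ C2) -> PT_separated C1 /\ PT_separated C2.
Proof.
induction C1 as [|f C1 IH]; simpl; auto. intros [H1 H2].
destruct (IH H2) as [HC1 HC2]. repeat split; auto.
intros Hf g Hg. apply H1; auto. apply in_or_app; auto.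
Qed.

Lemma countPT_eq0 C : countPT M C = 0%nat <-> forall g, In g C -> ~ isPTf g.
Proof.
induction C as [|f C IH]; simpl; [tauto|]. split.
- intros H g [<- | Hg] Hpg.
  + rewrite PTind_isPT in H by exact Hpg. discriminate.
  + apply (proj1 IH ltac:(lia) g Hg Hpg).
- intros H. rewrite PTind_not_isPT by (apply H; left; reflexivity).
  apply IH. intros g Hg. apply H. right. exact Hg.
Qed.

Lemma countPT_pos C g : In g C -> isPTf g -> (0 < countPT M C)%nat.
Proof.
intros Hg Hpg. destruct (Nat.eq_0_gt_0_cases (countPT M C)) as [H0 | Hpos]; [|exact Hpos].
exfalso. exact (proj1 (countPT_eq0 C) H0 g Hg Hpg).
Qed.

Lemma PT_separated_of_countPT_le1 C : (countPT M C <= 1)%nat -> PT_separated C.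
Proof.
induction C as [|f C IH]; simpl; [trivial|]. intros H. split; [|apply IH; lia].
intros Hf g Hg Hpg. rewrite PTind_isPT in H by exact Hf.
pose proof (countPT_pos C g Hg Hpg). lia.
Qed.

Lemma countPT_le1_of_colocated C x : PT_separated C -> (forall f, In f C -> fx f = x) ->
  (countPT M C <= 1)%nat.
Proof.
induction C as [|f C IH]; simpl; [lia|]. intros [H1 H2] Hx.
destruct (classic (isPTf f)) as [Hf | Hf].
- rewrite PTind_isPT by exact Hf. enough (countPT M C = 0%nat) by lia.
  apply countPT_eq0. intros g Hg Hpg. apply (H1 Hf g Hg Hpg). rewrite (Hx g), (Hx f); auto.
- rewrite PTind_not_isPT by exact Hf. apply IH; auto.
Qed.

Lemma PT_apart_of_countPT_ge2 C : PT_separated C -> (2 <= countPT M C)%nat -> PT_apart C.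
Proof.
induction C as [|f C IH]; simpl; [lia|]. intros [H1 H2] Hc.
destruct (classic (isPTf f)) as [Hf | Hf].
- rewrite PTind_isPT in Hc by exact Hf.
  destruct (classic (exists g, In g C /\ isPTf g)) as [[g [Hg Hpg]] | Hnone].
  + exists f, g. split; [left; reflexivity|]. split; [right; exact Hg|].
    split; [exact Hf|]. split; [exact Hpg|]. intros E. exact (H1 Hf g Hg Hpg (eq_sym E)).
  + assert (countPT M C = 0%nat) by (apply countPT_eq0; intros g Hg Hpg; eauto). lia.
- rewrite PTind_not_isPT in Hc by exact Hf.
  destruct (IH H2 ltac:(lia)) as (f' & g & Hf' & Hg & Pf' & Pg & Hne).
  exists f', g. split; [right; exact Hf'|]. split; [right; exact Hg|]. auto.
Qed.

Lemma countPT_ge2_of_PT_apart C : PT_apart C -> (2 <= countPT M C)%nat.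
Proof.
intros (f & g & Hf & Hg & Pf & Pg & Hne). revert Hf Hg.
induction C as [|h C IH]; simpl; intros Hf Hg; [contradiction|].
destruct Hf as [<- | Hf], Hg as [<- | Hg].
- contradiction.
- rewrite PTind_isPT by exact Pf. pose proof (countPT_pos C g Hg Pg). lia.
- rewrite PTind_isPT by exact Pg. pose proof (countPT_pos C f Hf Pf). lia.
- pose proof (IH Hf Hg). lia.
Qed.

Lemma chain_end_inOmega a C b : chain a C b -> inOmega a -> fronts_in_Omega C -> inOmega b.
Proof. induction 1; intros Ha HC; [exact Ha|]. inversion HC as [|? ? [_ Hc]]; auto. Qed.

Lemma countPT_chain_parity a C b : chain a C b -> inOmega a -> fronts_in_Omega C ->
  exists m, countPT M C = (PTind M a b + 2 * m)%nat.
Proof.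
induction 1 as [a | a x c C b Hch IH]; intros Ha HC.
- exists 0%nat. simpl. destruct Ha as [Ha | Ha]; [rewrite PTind_ff | rewrite PTind_cc]; auto.
- inversion HC as [|? ? [_ Hc] HC']; subst.
  destruct (IH Hc HC') as [m Hm].
  destruct (PTind_triangle a c b Ha Hc (chain_end_inOmega c C b Hch Hc HC')) as [k Hk].
  exists (m + k)%nat. simpl. unfold fa, fb in *. simpl. lia.
Qed.

Definition wellformed (a : state) (C : list front) (b : state) : Prop :=
  chain a C b /\ fronts_in_Omega C /\ fronts_in_Ge C /\ PT_separated C.

Definition count_drop (C C' : list front) (P : Prop) : Prop :=
  (exists m, countPT M C = countPT M C' + 2 * m)%nat /\ ((countPT M C' < countPT M C)%nat <-> P).

Lemma countPT_relocate x C : countPT M (map (fun f => (x, fa f, fb f)) C) = countPT M C.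
Proof. induction C; simpl; auto. Qed.

Lemma not_interacting_colocated G : ~ group_interacts G ->
  forall f, In f G -> fx f = fx (hd dfront G).
Proof.
intros Hni.
assert (Hadj : forall i, (S i < length G)%nat -> fx (nth i G dfront) = fx (nth (S i) G dfront)).
{ intros i Hi. apply NNPP. intros Hne. apply Hni. exists i. auto. }
assert (Hfirst : forall i, (i < length G)%nat -> fx (nth i G dfront) = fx (nth 0 G dfront)).
{ induction i as [|i IH]; intros Hi; [reflexivity|]. rewrite <- Hadj by lia. apply IH. lia. }
intros f Hf. destruct (In_nth G f dfront Hf) as [i [Hi <-]].
rewrite Hfirst by exact Hi. destruct G; reflexivity.
Qed.

Lemma group_out_fx n Tk Tk1 G out : group_out M n Tk Tk1 G out ->
  forall f, In f out -> fx f = pos Tk (hd dfront G) Tk1.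
Proof.
intros [[_ [L [_ ->]]] | [_ ->]] f Hf.
- exact (fan_fronts_fx _ _ _ _ Hf).
- apply in_map_iff in Hf as [g [<- _]]. reflexivity.
Qed.

Lemma group_out_spec n Tk Tk1 G out a b : G <> [] -> wellformed a G b ->
  group_out M n Tk Tk1 G out ->
  chain a out b /\ fronts_in_Omega out /\ fronts_in_Ge out /\ (countPT M out <= 1)%nat /\
  count_drop G out (PT_apart G).
Proof.
intros Hne (Hch & HOm & HGe & Hsep) Hout.
destruct (chain_hd_last a G b Hch Hne) as [Hhd Hlast].
assert (Ha : inOmega a).
{ destruct G as [|f G']; [congruence|]. rewrite <- Hhd. inversion HOm as [|? ? [Hf _]]. exact Hf. }
destruct (countPT_chain_parity a G b Hch Ha HOm) as [m Hm].
destruct Hout as [[_ [L [HRS ->]]] | [Hni ->]].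
- rewrite Hhd, Hlast in HRS. rewrite Hhd.
  destruct (RS_fan_spec n (pos Tk (hd dfront G) Tk1) a b L HRS) as (F1 & F2 & F3 & F4).
  pose proof (PTind_le1 a b).
  repeat split; try assumption; [lia | exists m; lia | |].
  + intros Hlt. apply PT_apart_of_countPT_ge2; [exact Hsep | lia].
  + intros Hap. pose proof (countPT_ge2_of_PT_apart G Hap). lia.
- pose proof (not_interacting_colocated G Hni) as Hcol.
  pose proof (countPT_le1_of_colocated G _ Hsep Hcol).
  unfold count_drop, fronts_in_Omega, fronts_in_Ge in *. rewrite countPT_relocate.
  split; [apply chain_relocate; exact Hch|].
  split; [apply Forall_map; exact HOm|]. split; [apply Forall_map; exact HGe|].
  split; [assumption|]. split; [exists 0%nat; lia|]. split; [lia|].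
  intros (f & g & Hf & Hg & _ & _ & Hfg). exfalso. apply Hfg. rewrite (Hcol f), (Hcol g); auto.
Qed.

Definition PT_meet (Tk Tk1 : R) (C : list front) : Prop :=
  exists f g, In f C /\ In g C /\ isPTf f /\ isPTf g /\ fx f <> fx g /\
    pos Tk f Tk1 = pos Tk g Tk1.

Lemma PT_meet_iff_PT_interact Tk Tk1 C : PT_meet Tk Tk1 C <-> PT_interact M Tk C Tk1.
Proof.
split.
- intros (f & g & Hf & Hg & Pf & Pg & Hne & Hp).
  destruct (In_nth C f dfront Hf) as [i [Hi <-]], (In_nth C g dfront Hg) as [j [Hj <-]].
  destruct (Nat.lt_total i j) as [Hij | [-> | Hij]]; [| contradiction |].
  + exists i, j. repeat split; auto.
  + exists j, i. repeat split; auto.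
- intros (i & j & Hij & Hj & Pi & Pj & Hne & Hp).
  exists (nth i C dfront), (nth j C dfront).
  repeat split; auto; apply nth_In; lia.
Qed.

Lemma PT_meet_app_group Tk Tk1 G rest p : (forall f, In f G -> pos Tk f Tk1 = p) ->
  (forall g, In g rest -> p < pos Tk g Tk1) ->
  PT_meet Tk Tk1 (G ++ rest) <-> PT_apart G \/ PT_meet Tk Tk1 rest.
Proof.
intros HG Hrest. split.
- intros (f & g & Hf & Hg & Pf & Pg & Hne & Hp).
  apply in_app_or in Hf as [Hf | Hf]; apply in_app_or in Hg as [Hg | Hg].
  + left. exists f, g. repeat split; assumption.
  + specialize (Hrest g Hg). rewrite (HG f Hf) in Hp. lra.
  + specialize (Hrest f Hf). rewrite (HG g Hg) in Hp. lra.
  + right. exists f, g. repeat split; assumption.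
- intros [(f & g & Hf & Hg & Pf & Pg & Hne) | (f & g & Hf & Hg & Pf & Pg & Hne & Hp)];
    exists f, g; repeat split; auto using in_or_app.
  rewrite (HG f Hf), (HG g Hg). reflexivity.
Qed.

Lemma resolve_fx n Tk Tk1 C C' : resolve M n Tk Tk1 C C' ->
  forall f', In f' C' -> exists g, In g C /\ fx f' = pos Tk g Tk1.
Proof.
induction 1 as [|G rest out out' HG _ _ Hout _ IH]; intros f' Hf'; [contradiction|].
apply in_app_or in Hf' as [Hf' | Hf'].
- exists (hd dfront G). split.
  + apply in_or_app. left. destruct G; [congruence | left; reflexivity].
  + exact (group_out_fx n Tk Tk1 G out Hout f' Hf').
- destruct (IH f' Hf') as [g [Hg Hx]]. exists g. split; [apply in_or_app; right|]; assumption.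
Qed.

Lemma resolve_spec n Tk Tk1 C C' a b : resolve M n Tk Tk1 C C' -> wellformed a C b ->
  StronglySorted (fun f g => pos Tk f Tk1 <= pos Tk g Tk1) C ->
  wellformed a C' b /\ count_drop C C' (PT_meet Tk Tk1 C).
Proof.
intros Hres. revert a b.
induction Hres as [|G rest out out' HG Hpos Hnext Hout Hres IH];
  intros a b (Hch & HOm & HGe & Hsep) Hsort.
- inversion Hch; subst. repeat split; try constructor.
  + exists 0%nat. reflexivity.
  + simpl. lia.
  + intros (f & _ & [] & _).
- unfold fronts_in_Omega, fronts_in_Ge in HOm, HGe.
  destruct (chain_app_inv _ _ _ _ Hch) as [m [HchG Hchr]].
  apply Forall_app in HOm as [HOmG HOmr]. apply Forall_app in HGe as [HGeG HGer].
  destruct (PT_separated_app_inv _ _ Hsep) as [HsepG Hsepr].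
  destruct (StronglySorted_app_inv _ _ _ Hsort) as (_ & Hsortr & Hbetween).
  set (p := pos Tk (hd dfront G) Tk1) in *.
  assert (Hafter : forall g, In g rest -> p < pos Tk g Tk1).
  { destruct rest as [|r rest']; [intros g []|].
    assert (Hhd : In (hd dfront G) G) by (destruct G; [congruence | left; reflexivity]).
    assert (Hr : p < pos Tk r Tk1).
    { pose proof (Hbetween _ r Hhd (or_introl eq_refl)) as Hle. fold p in Hle.
      destruct (Rle_lt_or_eq_dec _ _ Hle) as [Hlt | Heq]; [exact Hlt | congruence]. }
    apply StronglySorted_inv in Hsortr as [_ Hr'].
    rewrite Forall_forall in Hr'. intros g [<- | Hg]; [exact Hr|].
    pose proof (Hr' g Hg). lra. }
  destruct (group_out_spec n Tk Tk1 G out a m HG (conj HchG (conj HOmG (conj HGeG HsepG))) Hout)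
    as (O1 & O2 & O3 & O4 & [mo Hmo] & Ho).
  destruct (IH m b (conj Hchr (conj HOmr (conj HGer Hsepr))) Hsortr)
    as ((R1 & R2 & R3 & R4) & [mr Hmr] & Hr).
  unfold wellformed, count_drop. rewrite !countPT_app.
  split; [split; [|split; [|split]] | split].
  + eapply chain_app; eauto.
  + apply Forall_app. auto.
  + apply Forall_app. auto.
  + apply PT_separated_app; [apply PT_separated_of_countPT_le1; exact O4 | exact R4|].
    intros f g Hf Hg. rewrite (group_out_fx n Tk Tk1 G out Hout f Hf).
    destruct (resolve_fx n Tk Tk1 rest out' Hres g Hg) as [h [Hh ->]].
    pose proof (Hafter h Hh). fold p. lra.
  + exists (mo + mr)%nat. lia.
  + rewrite (PT_meet_app_group Tk Tk1 G rest p Hpos Hafter), <- Ho, <- Hr. lia.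
Qed.

Lemma init_spec n a js C : init_rel M n a js C -> inOmega a ->
  (forall y u, In (y, u) js -> inOmega u) -> StronglySorted (fun p q => fst p < fst q) js ->
  (exists b, wellformed a C b) /\ countPT M C = countPT_ubar M a js /\
  (forall f, In f C -> exists u, In (fx f, u) js).
Proof.
induction 1 as [a | a y b js L C HRS Hinit IH]; intros Ha Hjs Hsort.
- repeat split; [exists a; repeat split; constructor | intros f []].
- apply StronglySorted_inv in Hsort as [Hsort Hy]. rewrite Forall_forall in Hy.
  assert (Hb : inOmega b) by exact (Hjs y b (or_introl eq_refl)).
  destruct (IH Hb (fun y' u Hu => Hjs y' u (or_intror Hu)) Hsort)
    as ([b' (Hch & HOm & HGe & Hsep)] & Hcount & Hfx).
  destruct (RS_fan_spec n y a b L HRS) as (F1 & F2 & F3 & F4).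
  split; [exists b'; repeat split|split].
  + eapply chain_app; eauto.
  + apply Forall_app. auto.
  + apply Forall_app. auto.
  + apply PT_separated_app; [apply PT_separated_of_countPT_le1; rewrite F4; apply PTind_le1 | exact Hsep|].
    intros f g Hf Hg. rewrite (fan_fronts_fx _ _ _ _ Hf).
    destruct (Hfx g Hg) as [u Hu]. pose proof (Hy _ Hu). simpl in *. lra.
  + simpl. rewrite countPT_app, F4, Hcount. reflexivity.
  + intros f Hf. apply in_app_or in Hf as [Hf | Hf].
    * rewrite (fan_fronts_fx _ _ _ _ Hf). exists b. left. reflexivity.
    * destruct (Hfx f Hf) as [u Hu]. exists u. right. exact Hu.
Qed.

Section Run.

Variables (n : nat) (u0 : state) (js : list (R * state)) (K : nat) (T : nat -> R)
  (C : nat -> list front).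
Hypothesis Hubar : ubar_ok M n u0 js.
Hypothesis Hrun : wft_run M n u0 js K T C.

Lemma wft_stage_sorted k : (k < K)%nat ->
  StronglySorted (fun f g => pos (T k) f (T (S k)) <= pos (T k) g (T (S k))) (C k).
Proof.
intros Hk. destruct Hrun as (_ & _ & Hsteps). destruct (Hsteps k Hk) as (Hlt & Hle & _).
apply Sorted_StronglySorted; [intros x y z; lra|].
apply (Sorted_of_nth _ dfront). intros i Hi. apply Hle; [lra | exact Hi].
Qed.

Lemma wft_initial : (exists b, wellformed u0 (C 0%nat) b) /\
  countPT M (C 0%nat) = countPT_ubar M u0 js.
Proof.
destruct Hubar as (Hu0 & Hjs & Hsort), Hrun as (_ & Hinit & _).
destruct (init_spec n u0 js (C 0%nat) Hinit (proj1 Hu0)) as (Hwf & Hcount & _).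
- intros y u Hu. exact (proj1 (Hjs y u Hu)).
- apply Sorted_StronglySorted; [intros x y z; simpl; lra|].
  apply (Sorted_of_nth _ (0, u0)). exact Hsort.
- split; assumption.
Qed.

Lemma wft_wellformed k : (k <= K)%nat -> exists b, wellformed u0 (C k) b.
Proof.
induction k as [|k IH]; intros Hk; [exact (proj1 wft_initial)|].
destruct (IH ltac:(lia)) as [b Hwf]. destruct Hrun as (_ & _ & Hsteps).
destruct (Hsteps k ltac:(lia)) as (_ & _ & _ & _ & Hres).
exists b. exact (proj1 (resolve_spec n _ _ _ _ u0 b Hres Hwf (wft_stage_sorted k ltac:(lia)))).
Qed.

Lemma wft_count_drop k : (k < K)%nat ->
  count_drop (C k) (C (S k)) (PT_interact M (T k) (C k) (T (S k))).
Proof.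
intros Hk. destruct (wft_wellformed k ltac:(lia)) as [b Hwf].
destruct Hrun as (_ & _ & Hsteps). destruct (Hsteps k Hk) as (_ & _ & _ & _ & Hres).
destruct (resolve_spec n _ _ _ _ u0 b Hres Hwf (wft_stage_sorted k Hk)) as (_ & Hm & Hiff).
split; [exact Hm|]. rewrite Hiff. apply PT_meet_iff_PT_interact.
Qed.

End Run.

End Phases.

Theorem lemma2
  (M : Model) (dvf ddvf dp ddp : R -> R) (Rmax_ : R)
  (* standing assumptions on v_f *)
  (HR2 : 0 < Rf2 M)
  (Hvf_d1 : deriv_in (fun r => 0 <= r <= Rf2 M) (vf M) dvf)
  (Hvf_d2 : deriv_in (fun r => 0 <= r <= Rf2 M) dvf ddvf)
  (Hvf_c2 : cont_in (fun r => 0 <= r <= Rf2 M) ddvf)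
  (Hvf_pos : forall r, 0 <= r <= Rf2 M -> 0 <= vf M r)
  (Hvf_end : 0 < vf M (Rf2 M))
  (Hvf1 : forall r, 0 <= r <= Rf2 M -> dvf r <= 0)
  (Hvf2 : forall r, 0 <= r <= Rf2 M -> vf M r + r * dvf r > 0)
  (Hvf3 : forall r, 0 <= r <= Rf2 M -> 2 * dvf r + r * ddvf r <= 0)
  (* standing assumptions on p *)
  (HR1 : 0 < Rf1 M < Rf2 M)
  (Hp_d1 : deriv_in (fun r => Rf1 M <= r) (pp M) dp)
  (Hp_d2 : deriv_in (fun r => Rf1 M <= r) dp ddp)
  (Hp_c2 : cont_in (fun r => Rf1 M <= r) ddp)
  (Hp1 : forall r, Rf1 M <= r -> dp r > 0)
  (Hp2 : forall r, Rf1 M <= r -> 2 * dp r + r * ddp r > 0)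
  (Hincr : forall r s, Rf1 M <= r -> r < s -> s <= Rf2 M ->
             vf M r + pp M r < vf M s + pp M s)
  (Hvfp : forall r, Rf1 M <= r <= Rf2 M -> vf M r < r * dp r)
  (* R_max = p^{-1}(W_max) is well defined *)
  (HRmax : Rf1 M <= Rmax_ /\ pp M Rmax_ = Wmax M)
  (HVc : 0 < Vc M < Vfl M)
  (* the data of the construction *)
  (n : nat) (u0 : state) (js : list (R * state))
  (Hubar : ubar_ok M n u0 js)
  (K : nat) (T : nat -> R) (C : nat -> list front)
  (Hrun : wft_run M n u0 js K T C) :
  (* every phase transition present at any time t > 0 belongs to G_e *)
  (forall k, (k <= K)%nat -> forall f, In f (C k) ->
     isPT M (fa f) (fb f) -> inGe M (fa f) (fb f)) /\
  (* at t = 0 no interaction takes place: the number neither increases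
     nor decreases when passing from u^n(0) = ubar to t > 0 *)
  countPT M (C 0%nat) = countPT_ubar M u0 js /\
  (* no increase at interaction times *)
  (forall k, (k < K)%nat -> (countPT M (C (S k)) <= countPT M (C k))%nat) /\
  (* strict decrease iff two phase transitions interact *)
  (forall k, (k < K)%nat ->
     ((countPT M (C (S k)) < countPT M (C k))%nat <->
      PT_interact M (T k) (C k) (T (S k)))) /\
  (* decrease only by an even number *)
  (forall k, (k < K)%nat ->
     Nat.Even (countPT M (C k) - countPT M (C (S k)))).
Proof.
assert (Hvf_anti : forall r s, 0 <= r -> r <= s -> s <= Rf2 M -> vf M s <= vf M r)
  by exact (deriv_in_nonpos_antitone 0 (Rf2 M) (vf M) dvf Hvf_d1 Hvf1).
pose proof (wft_wellformed M HVc HR1 Hincr Hvf_anti n u0 js K T C Hubar Hrun) as Hwf.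
pose proof (wft_count_drop M HVc HR1 Hincr Hvf_anti n u0 js K T C Hubar Hrun) as Hdrop.
split; [|split; [|split; [|split]]].
- intros k Hk f Hf. destruct (Hwf k Hk) as [b (_ & _ & HGe & _)].
  exact (proj1 (Forall_forall _ _) HGe f Hf).
- exact (proj2 (wft_initial M HVc HR1 Hincr Hvf_anti n u0 js K T C Hubar Hrun)).
- intros k Hk. destruct (Hdrop k Hk) as [[m Hm] _]. lia.
- intros k Hk. exact (proj2 (Hdrop k Hk)).
- intros k Hk. destruct (Hdrop k Hk) as [[m Hm] _]. exists m. lia.
Qed.
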